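(* Let $e_1,e_2\in[0,1)$, $p_1,p_2>0$, and let $K,L,M,N$ be the real numbers defined in the context. For $f_2\in\mathbb{R}$ define \[ \begin{split} \alpha &= p_1(1+e_2\cos f_2)\bigl(K\sin f_2 - M(e_2+\cos f_2)\bigr) + p_2e_1e_2\sin f_2, \\ \beta &= p_1(1+e_2\cos f_2)\bigl(L\sin f_2 - N(e_2+\cos f_2)\bigr), \\ \gamma &= p_2e_2\sin f_2,\\ \kappa &= -p_2e_1(L\cos f_2 + N\sin f_2), \\ \lambda &= p_2e_1(K\cos f_2 + M\sin f_2), \\ \mu &= -p_2(1+e_1^2)(L\cos f_2 + N\sin f_2),\\ \nu &= p_1e_1(1+e_2\cos f_2) + p_2(K\cos f_2 + M\sin f_2), \end{split} \] and let \[ \mathscr{T}(f_2) = \begin{pmatrix} \alpha^2+\beta^2 & 0 & \beta\kappa-\alpha\lambda & 0\\ 2\alpha\gamma & \alpha^2+\beta^2 & \beta\mu-\lambda\gamma-\alpha\nu &\beta\kappa-\alpha\lambda\\ \gamma^2-\beta^2 & 2\alpha\gamma & \beta\kappa-\gamma\nu & \beta\mu-\lambda\gamma-\alpha\nu\\ 0 & \gamma^2-\beta^2 & 0 & \beta\kappa-\gamma\nu \end{pmatrix}. \] Then $\det\mathscr{T}(f_2)$ contains the factor $\beta^2(1+e_2\cos f_2)^2$: there is a trigonometric polynomial $h(f_2)$ (a polynomial in $\cos f_2,\sin f_2$) such that $\det\mathscr{T}(f_2)=(1+e_2\cos f_2)^2\,\beta(f_2)^2\,h(f_2)$ for all $f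_2$.
   Context: Two confocal elliptic orbits are given by Keplerian elements $a_i$, $e_i$, $i_i$, $\Omega_i$, $\omega_i$ ($i=1,2$), with conic parameters $p_i=a_i(1-e_i^2)$ and true anomalies $f_1,f_2$. Define the unit vectors $\mathcal{P}=(\cos\omega_1\cos\Omega_1-\cos i_1\sin\omega_1\sin\Omega_1,\ \cos\omega_1\sin\Omega_1+\cos i_1\sin\omega_1\cos\Omega_1,\ \sin\omega_1\sin i_1)$, $\mathcal{Q}=(-\sin\omega_1\cos\Omega_1-\cos i_1\cos\omega_1\sin\Omega_1,\ -\sin\omega_1\sin\Omega_1+\cos i_1\cos\omega_1\cos\Omega_1,\ \cos\omega_1\sin i_1)$, and $\mathfrak{p},\mathfrak{q}$ by the same formulas with $(i_2,\Omega_2,\omega_2)$ in place of $(i_1,\Omega_1,\omega_1)$. Set $K=\langle\mathcal{P},\mathfrak{p}\rangle$, $L=\langle\mathcal{Q},\mathfrak{p}\rangle$, $M=\langle\mathcal{P},\mathfrak{q}\rangle$, $N=\langle\mathcal{Q},\mathfrak{q}\rangle$. The matrix $\mathscr{T}$ is the Sylvester matrix, with respect to $\cos f_1$, of the polynomials $(\alpha^2+\beta^2)\cos^2 f_1 + 2\alpha\gamma\cos f_1 + \gamma^2-\beta^2$ and $(\beta\kappa - \alpha\lambda)\cos^2 f_1 + (\beta\mu - \lambda\gamma-\alpha\nu)\cos f_1 + \beta\kappa-\gamma\nu$. *)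

From HB Require Import structures.
From mathcomp Require Import all_boot all_order all_algebra.
From mathcomp Require Import all_classical all_reals all_analysis.
Set Implicit Arguments. Unset Strict Implicit. Unset Printing Implicit Defensive.
Import Order.TTheory GRing.Theory Num.Theory.
Local Open Scope ring_scope.

Section Defs.
Variable R : realType.

Definition Pvec (i Om om : R) : R * R * R :=
  (cos om * cos Om - cos i * sin om * sin Om,
   cos om * sin Om + cos i * sin om * cos Om,
   sin om * sin i).
Definition Qvec (i Om om : R) : R * R * R :=
  (- sin om * cos Om - cos i * cos om * sin Om,
   - sin om * sin Om + cos i * cos om * cos Om,
   cos om * sin i).

Definition dot3 (u v : R * R * R) : R :=
  u.1.1 * v.1.1 + u.1.2 * v.1.2 + u.2 * v.2.

Definition Kc i1 Om1 om1 i2 Om2 om2 := dot3 (Pvec i1 Om1 om1) (Pvec i2 Om2 om2).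
Definition Lc i1 Om1 om1 i2 Om2 om2 := dot3 (Qvec i1 Om1 om1) (Pvec i2 Om2 om2).
Definition Mc i1 Om1 om1 i2 Om2 om2 := dot3 (Pvec i1 Om1 om1) (Qvec i2 Om2 om2).
Definition Nc i1 Om1 om1 i2 Om2 om2 := dot3 (Qvec i1 Om1 om1) (Qvec i2 Om2 om2).

Definition alpha (e1 e2 p1 p2 K L M N f2 : R) : R :=
  p1 * (1 + e2 * cos f2) * (K * sin f2 - M * (e2 + cos f2))
  + p2 * e1 * e2 * sin f2.
Definition beta (e1 e2 p1 p2 K L M N f2 : R) : R :=
  p1 * (1 + e2 * cos f2) * (L * sin f2 - N * (e2 + cos f2)).
Definition gamma (e1 e2 p1 p2 K L M N f2 : R) : R :=
  p2 * e2 * sin f2.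
Definition kappa (e1 e2 p1 p2 K L M N f2 : R) : R :=
  - (p2 * e1 * (L * cos f2 + N * sin f2)).
Definition lambda (e1 e2 p1 p2 K L M N f2 : R) : R :=
  p2 * e1 * (K * cos f2 + M * sin f2).
Definition mu (e1 e2 p1 p2 K L M N f2 : R) : R :=
  - (p2 * (1 + e1 ^+ 2) * (L * cos f2 + N * sin f2)).
Definition nu (e1 e2 p1 p2 K L M N f2 : R) : R :=
  p1 * e1 * (1 + e2 * cos f2) + p2 * (K * cos f2 + M * sin f2).

Definition Tentry (a b g k l m n : R) (r c : nat) : R :=
  match r, c with
  | 0, 0 => a ^+ 2 + b ^+ 2
  | 0, 1 => 0
  | 0, 2 => b * k - a * l
  | 0, 3 => 0
  | 1, 0 => 2 * a * g
  | 1, 1 => a ^+ 2 + b ^+ 2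
  | 1, 2 => b * m - l * g - a * n
  | 1, 3 => b * k - a * l
  | 2, 0 => g ^+ 2 - b ^+ 2
  | 2, 1 => 2 * a * g
  | 2, 2 => b * k - g * n
  | 2, 3 => b * m - l * g - a * n
  | 3, 0 => 0
  | 3, 1 => g ^+ 2 - b ^+ 2
  | 3, 2 => 0
  | 3, 3 => b * k - g * n
  | _, _ => 0
  end.

Definition Tmx (e1 e2 p1 p2 K L M N f2 : R) : 'M[R]_4 :=
  \matrix_(r < 4, c < 4)
    Tentry (alpha e1 e2 p1 p2 K L M N f2) (beta e1 e2 p1 p2 K L M N f2)
           (gamma e1 e2 p1 p2 K L M N f2) (kappa e1 e2 p1 p2 K L M N f2)
           (lambda e1 e2 p1 p2 K L M N f2) (mu e1 e2 p1 p2 K L M N f2)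
           (nu e1 e2 p1 p2 K L M N f2) r c.

(* Evaluation of a bivariate polynomial h(X,Y) in {poly {poly R}}
   (outer variable Y, inner variable X) at X = x, Y = y. *)
Definition eval2 (h : {poly {poly R}}) (x y : R) : R := (h.[y%:P]).[x].

End Defs.

(* det T(f2) is the resultant of the quadratics
     P1 = (alpha x + gamma)^2 + beta^2 (x^2 - 1),
     P2 = beta (kappa (x^2 + 1) + mu x) - (alpha x + gamma) (lambda x + nu).
   Modulo beta they share the factor alpha x + gamma, which produces beta^2.
   With w = 1 + e2 cos f2, a = p1 (K sin f2 - M (e2 + cos f2)),
   b = p1 (L sin f2 - N (e2 + cos f2)), r = p2 (L cos f2 + N sin f2) and
   s = p2 (K cos f2 + M sin f2) one has alpha = w a + e1 gamma, beta = w b,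
   kappa = - e1 r, lambda = e1 s, mu = - (1 + e1^2) r, nu = w p1 e1 + s.
   At w = 0 both quadratics are multiples of (e1 x + 1)^2, which produces the
   second factor w^2; the cofactor is an explicit polynomial in w, a, b,
   gamma, r, s, p1, e1, hence in cos f2 and sin f2. *)

From HB Require Import structures.
From mathcomp Require Import all_boot all_order all_algebra.
From mathcomp Require Import all_classical all_reals all_analysis.
From mathcomp Require Import ring.
Import Order.TTheory GRing.Theory Num.Theory.
Local Open Scope ring_scope.

Definition quad_sylvester_mx {R : nzRingType} (a b c d e f : R) : 'M[R]_4 :=
  \matrix_(i < 4, j < 4)
    nth 0 (nth [::] [:: [:: a; 0; d; 0]; [:: b; a; e; d];
                        [:: c; b; f; e]; [:: 0; c; 0; f]] i) j.

Definition quad_resultant {R : nzRingType} (a b c d e f : R) : R :=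
  (a * f - c * d) ^+ 2 - (a * e - b * d) * (b * f - c * e).

Lemma det_quad_sylvester_mx (R : comNzRingType) (a b c d e f : R) :
  \det (quad_sylvester_mx a b c d e f) = quad_resultant a b c d e f.
Proof.
do 3 rewrite !(expand_det_row _ 0) !big_ord_recl !big_ord0 /cofactor.
by rewrite !det_mx11 !mxE /= /bump /= /quad_resultant; ring.
Qed.

Lemma Tentry_sylvester (R : realType) (al be ga ka la mu nu : R) :
  \matrix_(i < 4, j < 4) Tentry al be ga ka la mu nu i j
  = quad_sylvester_mx (al ^+ 2 + be ^+ 2) (2 * al * ga) (ga ^+ 2 - be ^+ 2)
      (be * ka - al * la) (be * mu - la * ga - al * nu) (be * ka - ga * nu).
Proof.
by apply/matrixP => -[[|[|[|[|i]]]] ?] // [[|[|[|[|j]]]] ?]; rewrite !mxE.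
Qed.

Definition orbit_cofactor {S : comNzRingType} (w a b g r s p e : S) : S :=
  let q := 1 - e ^+ 2 in
  g ^+ 2 * q * ((a * s + g * p * e ^+ 2) ^+ 2
                + q * (a ^+ 2 * r ^+ 2 + b ^+ 2 * s ^+ 2 + b ^+ 2 * r ^+ 2 * q
                       - 2 * b * g * r * p * e ^+ 2))
  - w * (2 * g * e * (a * (a ^+ 2 + b ^+ 2 * q) * (q * r ^+ 2 + s ^+ 2)
           + g * p * (a ^+ 2 * s * (3 * e ^+ 2 - 1) - 3 * a * b * r * q * e ^+ 2
                      - b ^+ 2 * s * q + a * g * p * e ^+ 2 * (2 * e ^+ 2 - 1)))
  - w * (a ^+ 4 * (e ^+ 2 * r ^+ 2 - s ^+ 2)
         - 2 * a * b * r * s * (a ^+ 2 + b ^+ 2 * q)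
         - b ^+ 2 * q * (q * r ^+ 2 * (a ^+ 2 + b ^+ 2) + a ^+ 2 * s ^+ 2)
         - g * p * e ^+ 2 * (6 * a ^+ 3 * s + 6 * a ^+ 2 * b * r * e ^+ 2
                             + 4 * a * b ^+ 2 * s - 2 * b ^+ 3 * r * q
                             + g * p * (a ^+ 2 * (6 * e ^+ 2 - 1) - b ^+ 2 * q))
  - w * (2 * a * p * e * ((a ^+ 2 + b ^+ 2) * (a * s + b * r * (1 + e ^+ 2))
                          + g * p * e ^+ 2 * (2 * a ^+ 2 + b ^+ 2))
  + w * (a ^+ 2 * p ^+ 2 * e ^+ 2 * (a ^+ 2 + b ^+ 2))))).

Lemma quad_resultant_orbit_factor {S : comNzRingType}
    (al be ka la mu nu w a b g r s p e : S) :
  al = w * a + e * g -> be = w * b -> ka = - (e * r) -> la = e * s ->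
  mu = - ((1 + e ^+ 2) * r) -> nu = w * p * e + s ->
  quad_resultant (al ^+ 2 + be ^+ 2) (2 * al * g) (g ^+ 2 - be ^+ 2)
    (be * ka - al * la) (be * mu - la * g - al * nu) (be * ka - g * nu)
  = be ^+ 2 * w ^+ 2 * orbit_cofactor w a b g r s p e.
Proof. by move=> -> -> -> -> -> ->; rewrite /quad_resultant /orbit_cofactor; ring. Qed.

Lemma rmorph_orbit_cofactor {A B : comNzRingType} (f : {rmorphism A -> B})
    (w a b g r s p e : A) :
  f (orbit_cofactor w a b g r s p e)
  = orbit_cofactor (f w) (f a) (f b) (f g) (f r) (f s) (f p) (f e).
Proof. by rewrite /orbit_cofactor !(rmorphE, rmorphM). Qed.

Theorem mainTheorem2 (R : realType)
  (e1 e2 p1 p2 i1 Om1 om1 i2 Om2 om2 : R)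
  (he1 : 0 <= e1) (he1' : e1 < 1) (he2 : 0 <= e2) (he2' : e2 < 1)
  (hp1 : 0 < p1) (hp2 : 0 < p2) :
  let K := Kc i1 Om1 om1 i2 Om2 om2 in
  let L := Lc i1 Om1 om1 i2 Om2 om2 in
  let M := Mc i1 Om1 om1 i2 Om2 om2 in
  let N := Nc i1 Om1 om1 i2 Om2 om2 in
  exists h : {poly {poly R}}, forall f2 : R,
    \det (Tmx e1 e2 p1 p2 K L M N f2)
    = (1 + e2 * cos f2) ^+ 2 * (beta e1 e2 p1 p2 K L M N f2) ^+ 2
      * eval2 h (cos f2) (sin f2).
Proof.
move=> K L M N.
pose C (x : R) : {poly {poly R}} := x%:P%:P.
pose c : {poly {poly R}} := 'X%:P.
pose s : {poly {poly R}} := 'X.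
exists (orbit_cofactor (1 + C e2 * c) (C p1 * (C K * s - C M * (C e2 + c)))
          (C p1 * (C L * s - C N * (C e2 + c))) (C p2 * C e2 * s)
          (C p2 * (C L * c + C N * s)) (C p2 * (C K * c + C M * s))
          (C p1) (C e1)) => f2.
pose ev : {rmorphism {poly {poly R}} -> R} :=
  horner_eval (cos f2) \o horner_eval (sin f2)%:P.
have evC x : ev (C x) = x by rewrite /= !horner_evalE !hornerC.
have evc : ev c = cos f2 by rewrite /= !horner_evalE hornerC hornerX.
have evs : ev s = sin f2 by rewrite /= !horner_evalE hornerX hornerC.
rewrite [eval2 _ _ _](rmorph_orbit_cofactor ev) !(rmorphE, rmorphM) !evC evc evs.
rewrite /Tmx Tentry_sylvester det_quad_sylvester_mx.
rewrite (quad_resultant_orbit_factor _ _ _ _ _ _ (1 + e2 * cos f2)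
  (p1 * (K * sin f2 - M * (e2 + cos f2))) (p1 * (L * sin f2 - N * (e2 + cos f2)))
  _ (p2 * (L * cos f2 + N * sin f2)) (p2 * (K * cos f2 + M * sin f2)) p1 e1).
all: by rewrite /alpha /beta /gamma /kappa /lambda /mu /nu; ring.
Qed.
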